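(* Let $\kappa\ge2$. Every $P\in\mathcal{DS}^\kappa_{2,m}$ can be written as $$P(j^\kappa f)=\sum_{-\frac{\kappa-1}{\kappa}m\le a\le m}(f_1')^a\,\mathcal P_a\big(f_2',\Lambda^3,\Lambda^5_1,\Lambda^7_{1,1},\Lambda^9_{1,1,1},\dots,\Lambda^{2\kappa-1}_{1,\dots,1}\big),$$ with $a$ ranging over integers and polynomials $\mathcal P_a$ weighted homogeneous of weight $m-a$ (the argument $f_2'$ having weight 1 and $\Lambda^{2\lambda-1}_{1,\dots,1}$ weight $2\lambda-1$). Conversely, every rational expression of this form which is a polynomial in $j^\kappa f$ belongs to $\mathcal{DS}^\kappa_{2,m}$.
   Context: Dimension 2. $f_i^{(\lambda)}$ ($i\in\{1,2\}$, $\lambda\ge1$) are independent indeterminates (derivatives of a germ $f=(f_1,f_2):(\mathbb C,0)\to\mathbb C^2$), $j^\kappa f=(f_1^{(\lambda)},f_2^{(\lambda)})_{\lambda\le\kappa}$. A polynomial $P(j^\kappa f)$ is invariant by reparametrization of weight $m$ if $P(j^\kappa(f\circ\phi))=(\phi')^mP((j^\kappa f)\circ\phi)$ for all holomorphic germs $f$ and local biholomorphisms $\phi$ of $\mathbb C$; these form $\mathcal{DS}^\kappa_{2,m}$. $D=\sum_{i,\lambda}f_i^{(\lambda+1)}\partial/\partial f_i^{(\lambda)}$; for $P,Q$ of weights $m,n$, $[P,Q]:=n\,DP\cdot Q-m\,P\cdot DQ$ (weight $m+n+1$). $\Lambda^3:=f_1'f_2''-f_1''f_2'$ (weight 3), and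 recursively $\Lambda^{2\lambda-1}_{1,\dots,1}:=[\Lambda^{2\lambda-3}_{1,\dots,1},f_1']$ for $3\le\lambda\le\kappa$ (with $\lambda-2$ lower indices; so $\Lambda^5_1=[\Lambda^3,f_1']$, $\Lambda^7_{1,1}=[\Lambda^5_1,f_1']$, etc.). *)

From HB Require Import structures.
From mathcomp Require Import all_boot all_order all_algebra.
Set Implicit Arguments. Unset Strict Implicit. Unset Printing Implicit Defensive.
Import Order.TTheory GRing.Theory Num.Theory.
Local Open Scope ring_scope.

Inductive mexpr (V C : Type) : Type :=
  | MVar of V
  | MCst of C
  | MAdd of mexpr V C & mexpr V C
  | MMul of mexpr V C & mexpr V C.
Arguments MVar {V C}.
Arguments MCst {V C}.
Arguments MAdd {V C}.
Arguments MMul {V C}.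

Fixpoint meval (V C : Type) (R : comNzRingType) (c : C -> R) (env : V -> R)
    (e : mexpr V C) : R :=
  match e with
  | MVar v => env v
  | MCst a => c a
  | MAdd p q => meval c env p + meval c env q
  | MMul p q => meval c env p * meval c env q
  end.

(* Jet variables: (i, k) stands for f_{i+1}^{(k+1)}, i in {0,1}. *)
Definition JV := ('I_2 * nat)%type.

(* P only involves f_i^{(lambda)} with lambda <= kappa, i.e. P is a
   polynomial in j^kappa f. *)
Fixpoint jet_order_le (C : Type) (kappa : nat) (e : mexpr JV C) : bool :=
  match e with
  | MVar v => (v.2 < kappa)%N
  | MCst _ => true
  | MAdd p q => jet_order_le kappa p && jet_order_le kappa q
  | MMul p q => jet_order_le kappa p && jet_order_le kappa q
  end.

Section Jets.
Variable C : numClosedFieldType.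

(* j^kappa of a (polynomial) map f = (f_1, f_2), as a valuation of jet
   variables in {poly C}: f_i^{(k+1)}. Variables beyond the order used are
   harmless since P only uses orders <= kappa. *)
Definition jet_env (f : 'I_2 -> {poly C}) : JV -> {poly C} :=
  fun v => (f v.1)^`(v.2.+1).

Definition jet_env_comp (f : 'I_2 -> {poly C}) (phi : {poly C}) : JV -> {poly C} :=
  fun v => (f v.1)^`(v.2.+1) \Po phi.

Definition invariant_reparam (m : nat) (P : mexpr JV C) : Prop :=
  forall (f : 'I_2 -> {poly C}) (phi : {poly C}),
    phi^`() != 0 ->
    meval (@polyC C) (jet_env (fun i => f i \Po phi)) P
    = phi^`() ^+ m * meval (@polyC C) (jet_env_comp f phi) P.

Definition DS (kappa m : nat) (P : mexpr JV C) : Prop :=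
  jet_order_le kappa P /\ invariant_reparam m P.

(* The total derivative D = sum f_i^{(l+1)} d/d f_i^{(l)} on expressions. *)
Fixpoint Dexpr (e : mexpr JV C) : mexpr JV C :=
  match e with
  | MVar v => MVar (v.1, v.2.+1)
  | MCst _ => MCst 0
  | MAdd p q => MAdd (Dexpr p) (Dexpr q)
  | MMul p q => MAdd (MMul p (Dexpr q)) (MMul (Dexpr p) q)
  end.

Definition bracket (m n : nat) (P Q : mexpr JV C) : mexpr JV C :=
  MAdd (MMul (MCst (n%:R)) (MMul (Dexpr P) Q))
       (MMul (MCst (- (m%:R))) (MMul P (Dexpr Q))).

Definition f1' : mexpr JV C := MVar (0%R : 'I_2, 0%N).
Definition f1'' : mexpr JV C := MVar (0%R : 'I_2, 1%N).
Definition f2' : mexpr JV C := MVar (1%R : 'I_2, 0%N).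
Definition f2'' : mexpr JV C := MVar (1%R : 'I_2, 1%N).

(* Lam j = Lambda^{2(j+2)-1}_{1,...,1} (weight 2j+3):
   Lam 0 = Lambda^3, Lam (j+1) = [Lam j, f1']. *)
Fixpoint Lam (j : nat) : mexpr JV C :=
  match j with
  | 0 => MAdd (MMul f1' f2'') (MMul (MCst (-1)) (MMul f1'' f2'))
  | j'.+1 => bracket (2 * j' + 3) 1 (Lam j') f1'
  end.

(* Arguments of the P_a: variable 0 -> f2' (weight 1),
   variable j+1 -> Lam j (weight 2j+3) for j+1 < kappa. *)
Definition arg_weight (kappa : nat) (j : 'I_kappa) : nat :=
  if (j : nat) == 0%N then 1%N else (2 * j + 1)%N.

Definition arg_env (kappa : nat) (x : JV -> C) (j : 'I_kappa) : C :=
  if (j : nat) == 0%N then meval id x f2' else meval id x (Lam (j.-1)).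

(* Weighted homogeneity of weight d (semantic, over the infinite field C). *)
Definition weighted_homog (V : Type) (w : V -> nat) (d : int) (Q : mexpr V C) : Prop :=
  forall (t : C) (y : V -> C),
    meval id (fun v => t ^+ w v * y v) Q = t ^ d * meval id y Q.

Definition a_range (kappa m : nat) : seq int :=
  [seq a <- [seq (k%:Z - ((kappa.-1 * m)%N)%:Z) | k <- iota 0 (kappa * m).+1]
   | (- ((kappa.-1 * m)%N)%:Z <= kappa%:Z * a)%R && (a <= m%:Z)%R].

Definition lam_sum (kappa m : nat) (Pa : int -> mexpr 'I_kappa C) (x : JV -> C) : C :=
  \sum_(a <- a_range kappa m) (meval id x f1') ^ a * meval id (@arg_env kappa x) (Pa a).

End Jets.

(* - f_1', f_2' are invariant of weight 1 and the bracket [P, Q] of invariants of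
     weights m, n is invariant of weight m + n + 1 (chain rule); hence
     Lambda^(2j+3) = [..[Lambda^3, f_1'].., f_1'] is invariant of weight 2j+3.
   - Normal form: a jet x with u = f_1' != 0 is the jet at 0 of (t, g_2) o phi with
     phi(0) = 0, phi'(0) = u (formal inverse function theorem). So an invariant e
     of weight w satisfies e(x) = u^w e(y) for a normal jet y (f_1' = 1,
     f_1^(k) = 0 for k >= 2), on which Lambda^(2j+3) = f_2^(j+2).
   - Direct part: restrict P to normal jets, as a polynomial Q in z_k = f_2^(k+1),
     and split Q into components Q_d of weight d (z_k of weight 2k+1). Then
     P(x) = sum_d u^(m-d) Q_d(f_2', Lambda^3, ...); invariance under the dilations
     phi = c t forces Q_d = 0 when kappa d > (2 kappa - 1) m, which is exactly the
     range of a = m - d in the theorem.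
   - Converse: the representation is termwise invariant wherever f_1' o phi and
     phi' do not vanish; polynomial identities holding off the zeros of a nonzero
     polynomial hold everywhere, and perturbing f_1 by c t gives the general case. *)

From HB Require Import structures.
From mathcomp Require Import all_boot all_order all_algebra ring zify.
Set Implicit Arguments. Unset Strict Implicit. Unset Printing Implicit Defensive.
Import Order.TTheory GRing.Theory Num.Theory.
Local Open Scope ring_scope.

Section Evaluation.
Variables (V K : Type) (R : comNzRingType) (c : K -> R).

Lemma meval_eq_env (env1 env2 : V -> R) (e : mexpr V K) :
  env1 =1 env2 -> meval c env1 e = meval c env2 e.
Proof.
by move=> E; elim: e => [v|a|p IHp q IHq|p IHp q IHq] //=; rewrite ?E ?IHp ?IHq.
Qed.

Fixpoint msubst (W : Type) (sb : V -> mexpr W K) (e : mexpr V K) : mexpr W K :=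
  match e with
  | MVar v => sb v
  | MCst a => MCst a
  | MAdd p q => MAdd (msubst sb p) (msubst sb q)
  | MMul p q => MMul (msubst sb p) (msubst sb q)
  end.

Lemma meval_msubst (W : Type) (env : W -> R) (sb : V -> mexpr W K) (e : mexpr V K) :
  meval c env (msubst sb e) = meval c (fun v => meval c env (sb v)) e.
Proof. by elim: e => [v|a|p IHp q IHq|p IHp q IHq] //=; rewrite IHp IHq. Qed.

End Evaluation.

Section JetOrder.
Variable K : Type.

Lemma jet_order_le_mono (k l : nat) (e : mexpr JV K) :
  (k <= l)%N -> jet_order_le k e -> jet_order_le l e.
Proof.
move=> kl; elim: e => [v|a|p IHp q IHq|p IHp q IHq] //=.
- by move=> h; apply: leq_trans kl.
- by move=> /andP[/IHp -> /IHq ->].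
- by move=> /andP[/IHp -> /IHq ->].
Qed.

Lemma meval_low_order (R : comNzRingType) (c : K -> R) (k : nat) (env1 env2 : JV -> R)
    (e : mexpr JV K) :
  jet_order_le k e -> (forall v : JV, (v.2 < k)%N -> env1 v = env2 v) ->
  meval c env1 e = meval c env2 e.
Proof.
move=> He Henv; elim: e He => [v|a|p IHp q IHq|p IHp q IHq] //=.
- by move=> /Henv.
- by move=> /andP[/IHp -> /IHq ->].
- by move=> /andP[/IHp -> /IHq ->].
Qed.

End JetOrder.

Section PolynomialValues.
Variables (V : Type) (K : comNzRingType).

Lemma meval_horner (env : V -> {poly K}) (e : mexpr V K) (x : K) :
  (meval (@polyC K) env e).[x] = meval id (fun v => (env v).[x]) e.
Proof.
elim: e => [v|a|p IHp q IHq|p IHp q IHq] //=; first by rewrite hornerC.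
  by rewrite hornerD IHp IHq.
by rewrite hornerM IHp IHq.
Qed.

Lemma meval_comp_poly (env : V -> {poly K}) (e : mexpr V K) (q : {poly K}) :
  (meval (@polyC K) env e) \Po q = meval (@polyC K) (fun v => env v \Po q) e.
Proof.
elim: e => [v|a|p IHp q' IHq|p IHp q' IHq] //=; first by rewrite comp_polyC.
  by rewrite comp_polyD IHp IHq.
by rewrite comp_polyM IHp IHq.
Qed.

Lemma meval_affine (a b : V -> K) (e : mexpr V K) (c : K) :
  meval id (fun v => a v + c * b v) e =
  (meval (@polyC K) (fun v => (a v)%:P + b v *: 'X) e).[c].
Proof.
rewrite meval_horner; apply: meval_eq_env => v.
by rewrite hornerD hornerC hornerZ hornerX mulrC.
Qed.

End PolynomialValues.

Section PolynomialIdentities.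
Variable R : numDomainType.

Lemma poly_eq0_everywhere (p : {poly R}) : (forall t, p.[t] = 0) -> p = 0.
Proof.
move=> H; apply/eqP; apply: contraT => Hp.
have := @max_poly_roots _ p [seq i%:R | i <- iota 0 (size p)] Hp.
rewrite size_map size_iota ltnn; apply.
  by apply/allP => x _; rewrite /root H.
rewrite map_inj_uniq ?iota_uniq //.
by move=> i j /eqP; rewrite eqr_nat => /eqP.
Qed.

Lemma poly_eq0_off_zeros (p q : {poly R}) :
  q != 0 -> (forall t, q.[t] != 0 -> p.[t] = 0) -> p = 0.
Proof.
move=> Hq H.
have : p * q = 0.
  apply: poly_eq0_everywhere => t; rewrite hornerM.
  by have [->|/H ->] := eqVneq q.[t] 0; rewrite ?mulr0 ?mul0r.
by move/eqP; rewrite mulf_eq0 (negbTE Hq) orbF => /eqP.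
Qed.

End PolynomialIdentities.

Section Taylor.
Variable R : numFieldType.

Lemma horner0_derivn (p : {poly R}) n : (p^`(n)).[0] = p`_n * n`!%:R.
Proof. by rewrite horner_coef0 coef_derivn addn0 ffactnn mulr_natr. Qed.

Lemma horner0_derivn_X k :
  (('X : {poly R})^`(k.+1)).[0] = if k == 0%N then 1 else 0.
Proof.
by rewrite horner0_derivn coefX; case: k => [|k] /=; rewrite ?mul1r ?mul0r.
Qed.

Lemma horner0_derivn_comp_scale (p : {poly R}) (c : R) n :
  ((p \Po (c *: 'X))^`(n)).[0] = c ^+ n * (p^`(n)).[0].
Proof.
rewrite !horner0_derivn mulrA; congr (_ * _).
elim/poly_ind: p n => [|p a IH] n; first by rewrite comp_poly0 coef0 mulr0.
rewrite comp_poly_MXaddC -scalerAr coefD coefZ coefMX coefD coefMX !coefC.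
case: n => [|n] /=; first by rewrite mulr0 !add0r expr0 mul1r.
by rewrite !addr0 (IH n) exprS mulrA.
Qed.

(* The polynomial t * taylor k s has prescribed jets s 0, ..., s (k-1) at 0. *)
Definition taylor (k : nat) (s : nat -> R) : {poly R} :=
  \poly_(i < k) (s i / (i.+1)`!%:R).

Lemma horner0_derivn_Xtaylor k (s : nat -> R) i : (i < k)%N ->
  (('X * taylor k s)^`(i.+1)).[0] = s i.
Proof.
move=> ik; rewrite horner0_derivn coefXM /= coef_poly ik divfK //.
by rewrite pnatr_eq0 -lt0n fact_gt0.
Qed.

End Taylor.

Section RightComposition.
Variable F : fieldType.

(* Composition on the right with t psi(t), psi(0) != 0, is onto modulo t^(N+1):
   this is the formal inverse function theorem used to normalize f_1 to t. *)
Lemma comp_Xmul_onto_trunc (psi h : {poly F}) N : psi`_0 != 0 ->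
  exists g : {poly F}, forall i, (i <= N)%N -> (g \Po ('X * psi))`_i = h`_i.
Proof.
move=> psi0; elim: N => [|N [g Hg]].
  exists (h`_0)%:P => i; rewrite leqn0 => /eqP ->.
  by rewrite comp_polyC coefC.
set c := (h`_N.+1 - (g \Po ('X * psi))`_N.+1) / psi`_0 ^+ N.+1.
exists (g + c *: 'X^(N.+1)) => i Hi.
rewrite comp_polyD comp_polyZ comp_Xn_poly exprMn coefD coefZ coefXnM.
case: ltnP => Hin; first by rewrite mulr0 addr0 Hg // -ltnS.
have -> : i = N.+1 by apply/eqP; rewrite eqn_leq Hi Hin.
rewrite subnn -horner_coef0 horner_exp horner_coef0 /c divfK ?expf_neq0 //.
by rewrite addrC subrK.
Qed.

End RightComposition.

Section LaurentBound.
Variable R : numFieldType.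

(* If W(s) = s^E F(s^-k) for all s != 0, with W a polynomial, then F has no
   monomial of degree d with k d > E: such a monomial would be a pole of W. *)
Lemma coef_vanish_of_laurent (F W : {poly R}) (k E : nat) :
  (0 < k)%N -> (forall s, s != 0 -> W.[s] = s ^+ E * F.[s^-1 ^+ k]) ->
  forall d, (E < k * d)%N -> F`_d = 0.
Proof.
move=> k0 HW d Ed.
have [Fd|dF] := leqP (size F) d; first by rewrite nth_default.
set n := size F.
(* G is F reversed and dilated: G(s) = s^(k n) F(s^-k). *)
set G := \sum_(i < n) F`_i *: ('X^(k * (n - i)) : {poly R}).
have XW : 'X^(k * n) * W = 'X^E * G.
  apply/eqP; rewrite -subr_eq0; apply/eqP.
  apply: (poly_eq0_off_zeros (q := 'X)); first by rewrite polyX_eq0.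
  move=> s; rewrite hornerX => s0.
  rewrite hornerD hornerN !hornerM !hornerXn HW // (horner_coef F) /G horner_sum.
  rewrite mulrCA mulr_sumr -mulrBr -sumrB big1 ?mulr0 // => i _.
  rewrite hornerZ hornerXn -exprM mulrCA; apply/eqP; rewrite subr_eq0; apply/eqP.
  congr (_ * _); have iN : (i <= n)%N by apply: ltnW.
  rewrite -{1}(subnK iN) mulnDr exprD -mulrA exprVn.
  by rewrite mulfV ?expf_neq0 // mulr1.
have := congr1 (fun p : {poly R} => p`_(k * (n - d) + E)) XW.
rewrite /= !coefXnM.
have -> : (k * (n - d) + E < k * n)%N by nia.
rewrite ltnNge leq_addl /= addnK /G coef_sum => /esym.
rewrite (bigD1 (Ordinal dF)) //= big1 ?addr0; first by rewrite coefZ coefXn eqxx mulr1.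
move=> i ni; rewrite coefZ coefXn; case: eqP => [e|_]; last by rewrite mulr0.
suff : i = Ordinal dF by move/eqP: ni.
move/eqP: e; rewrite eqn_mul2l (gtn_eqF k0) /=.
by rewrite eqn_sub2lE ?(ltnW dF) ?(ltnW (ltn_ord i)) // => /eqP d_i; apply: val_inj.
Qed.

End LaurentBound.

Section WeightedParts.
Variables (V : Type) (K : comNzRingType) (w : V -> nat).

Fixpoint wpart (e : mexpr V K) (d : nat) : mexpr V K :=
  match e with
  | MVar v => if w v == d then MVar v else MCst 0
  | MCst a => if d == 0%N then MCst a else MCst 0
  | MAdd p q => MAdd (wpart p d) (wpart q d)
  | MMul p q => \big[MAdd/MCst 0]_(i < d.+1) MMul (wpart p i) (wpart q (d - i))
  end.

Lemma meval_big (env : V -> K) n (F : 'I_n -> mexpr V K) :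
  meval id env (\big[MAdd/MCst 0]_(i < n) F i) = \sum_(i < n) meval id env (F i).
Proof. exact: (big_morph (meval id env)). Qed.

Definition wpoly (y : V -> K) (e : mexpr V K) : {poly K} :=
  meval (@polyC K) (fun v => y v *: 'X^(w v)) e.

Lemma horner_wpoly (y : V -> K) (e : mexpr V K) (t : K) :
  (wpoly y e).[t] = meval id (fun v => y v * t ^+ w v) e.
Proof. by rewrite meval_horner; apply: meval_eq_env => v; rewrite hornerZ hornerXn. Qed.

Lemma coef_wpoly (y : V -> K) (e : mexpr V K) d :
  (wpoly y e)`_d = meval id y (wpart e d).
Proof.
elim: e d => [v|a|p IHp q IHq|p IHp q IHq] d /=.
- rewrite coefZ coefXn eq_sym; case: eqP => _ /=; first by rewrite mulr1.
  by rewrite mulr0.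
- by rewrite coefC; case: eqP.
- by rewrite coefD IHp IHq.
- by rewrite coefM meval_big; apply: eq_bigr => i _; rewrite IHp IHq.
Qed.

Lemma wpart_homog (y : V -> K) (t : K) (e : mexpr V K) d :
  meval id (fun v => t ^+ w v * y v) (wpart e d) = t ^+ d * meval id y (wpart e d).
Proof.
elim: e d => [v|a|p IHp q IHq|p IHp q IHq] d /=.
- by case: eqP => [<-|] //= _; rewrite mulr0.
- by case: eqP => [->|_] /=; rewrite ?expr0 ?mul1r ?mulr0.
- by rewrite IHp IHq mulrDr.
- rewrite !meval_big mulr_sumr; apply: eq_bigr => i _ /=.
  by rewrite IHp IHq mulrACA -exprD subnKC // -ltnS.
Qed.

Lemma meval_sum_wparts (y : V -> K) (e : mexpr V K) N :
  (size (wpoly y e) <= N)%N -> meval id y e = \sum_(d < N) meval id y (wpart e d).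
Proof.
move=> HN; have -> : meval id y e = (wpoly y e).[1].
  by rewrite horner_wpoly; apply: meval_eq_env => v; rewrite expr1n mulr1.
rewrite (horner_coef_wide _ HN); apply: eq_bigr => i _.
by rewrite expr1n mulr1 coef_wpoly.
Qed.

End WeightedParts.

(* The ring identity behind the chain rule for brackets: with a = phi',
   b = phi'', the cross terms coming from the derivatives of a^m and a^n
   cancel, leaving a^(m+n+1) times the bracket. *)
Lemma bracket_chain_identity (R : comNzRingType) (m n : nat) (a b P P1 Q Q1 : R) :
  n%:R * ((b * a ^+ m.-1 *+ m * P + a ^+ m * (P1 * a)) * (a ^+ n * Q)) +
  - m%:R * ((a ^+ m * P) * (b * a ^+ n.-1 *+ n * Q + a ^+ n * (Q1 * a)))
  = a ^+ (m + n + 1) * (n%:R * (P1 * Q) + - m%:R * (P * Q1)).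
Proof.
rewrite !exprD expr1 -(mulr_natr (b * _ ^+ m.-1)) -(mulr_natr (b * _ ^+ n.-1)).
by case: m => [|m]; case: n => [|n]; rewrite ?exprS /=; ring.
Qed.

Section Invariants.
Variable C : numClosedFieldType.

Definition M (e : mexpr JV C) (f : 'I_2 -> {poly C}) : {poly C} :=
  meval (@polyC C) (jet_env f) e.

Definition sinv (w : nat) (F : ('I_2 -> {poly C}) -> {poly C}) :=
  forall (f : 'I_2 -> {poly C}) (phi : {poly C}), phi^`() != 0 ->
    F (fun i => f i \Po phi) = phi^`() ^+ w * (F f \Po phi).

Lemma M_Dexpr e f : M (Dexpr e) f = (M e f)^`().
Proof.
rewrite /M; elim: e => [v|a|p IHp q IHq|p IHp q IHq] /=.
- by [].
- by rewrite derivC polyC0.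
- by rewrite IHp IHq derivD.
- by rewrite IHp IHq derivM addrC.
Qed.

Lemma M_comp e f phi : M e f \Po phi = meval (@polyC C) (jet_env_comp f phi) e.
Proof. by rewrite /M meval_comp_poly. Qed.

Lemma invariant_sinv (m : nat) (P : mexpr JV C) : invariant_reparam m P -> sinv m (M P).
Proof. by move=> H f phi phi'0; rewrite /M H // -M_comp. Qed.

Lemma sinv_ext w F G : F =1 G -> sinv w F -> sinv w G.
Proof. by move=> FG HF f phi phi'0; rewrite -!FG HF. Qed.

Lemma sinv_opp w F : sinv w F -> sinv w (fun f => - F f).
Proof. by move=> HF f phi phi'0; rewrite HF // (raddfN (comp_poly phi)) mulrN. Qed.

Lemma sinv_bracket m n F G : sinv m F -> sinv n G ->
  sinv (m + n + 1)
    (fun f => (n%:R)%:P * ((F f)^`() * G f) + (- m%:R)%:P * (F f * (G f)^`())).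
Proof.
move=> HF HG f phi phi'0 /=.
rewrite (HF f phi phi'0) (HG f phi phi'0) !derivM !deriv_exp !deriv_comp.
rewrite comp_polyD !comp_polyM !comp_polyC polyCN !polyC_natr.
exact: bracket_chain_identity.
Qed.

Lemma sinv_first_derivative i : sinv 1 (M (MVar (i, 0%N))).
Proof. by move=> f phi phi'0; rewrite /M /jet_env /= expr1 deriv_comp mulrC. Qed.

Lemma sinv_Lam j : sinv (2 * j + 3) (M (Lam C j)).
Proof.
elim: j => [|j IH].
  have H := sinv_bracket (sinv_first_derivative 0) (sinv_first_derivative 1).
  apply: (sinv_ext _ (sinv_opp H)) => f.
  rewrite /M /= -!/(M _ f) polyC1 !mul1r /jet_env /=.
  by rewrite polyCN polyC1 !mulN1r opprD opprK addrC.
have -> : (2 * j.+1 + 3 = 2 * j + 3 + 1 + 1)%N by lia.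
apply: (sinv_ext _ (sinv_bracket IH (sinv_first_derivative 0))) => f.
by rewrite /M /= -!/(M _ f) -M_Dexpr.
Qed.

Lemma Dexpr_order k e : jet_order_le k e -> jet_order_le k.+1 (@Dexpr C e).
Proof.
elim: e => [v|a|p IHp q IHq|p IHp q IHq] //=.
- by move=> /andP[/IHp -> /IHq ->].
- move=> /andP[hp hq]; rewrite (IHp hp) (IHq hq).
  by rewrite (jet_order_le_mono (leqnSn _) hp) (jet_order_le_mono (leqnSn _) hq).
Qed.

Lemma Lam_order j : jet_order_le j.+2 (Lam C j).
Proof.
elim: j => [|j IH] //=.
by rewrite (Dexpr_order IH) (jet_order_le_mono (leqnSn _) IH).
Qed.

Lemma M_Lam_normal j f : f 0 = 'X -> M (Lam C j) f = (f 1)^`(j.+2).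
Proof.
move=> f0; elim: j => [|j IH].
  rewrite /M /= /jet_env /= f0 derivX derivC.
  by rewrite mul1r mul0r mulr0 addr0.
rewrite /M /= -!/(M _ f) M_Dexpr IH /jet_env /= f0 derivX derivC.
by rewrite polyC1 mul1r mulr1 mulr0 mulr0 addr0.
Qed.

Lemma sinv_pointwise w e f phi t0 : sinv w (M e) -> phi^`() != 0 ->
  meval id (fun v => (jet_env (fun i => f i \Po phi) v).[t0]) e =
  (phi^`()).[t0] ^+ w * meval id (fun v => (jet_env_comp f phi v).[t0]) e.
Proof.
move=> H phi'0; rewrite -!meval_horner -/(M e _) (H f phi phi'0).
by rewrite hornerM horner_exp M_comp.
Qed.

Definition argE kappa (j : 'I_kappa) : mexpr JV C :=
  if (j : nat) == 0%N then f2' C else Lam C j.-1.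

Lemma arg_envE kappa (x : JV -> C) (j : 'I_kappa) : arg_env x j = meval id x (argE j).
Proof. by rewrite /arg_env /argE; case: eqP. Qed.

Lemma arg_weightE kappa (j : 'I_kappa) : arg_weight j = (2 * j + 1)%N.
Proof. by rewrite /arg_weight; case: eqP => // ->. Qed.

Lemma sinv_argE kappa (j : 'I_kappa) : sinv (arg_weight j) (M (argE j)).
Proof.
rewrite /argE arg_weightE; case: eqP => [->|j0]; first exact: sinv_first_derivative.
have -> : (2 * j + 1 = 2 * j.-1 + 3)%N by move/eqP: j0; lia.
exact: sinv_Lam.
Qed.

Lemma argE_order kappa (j : 'I_kappa) : jet_order_le kappa (argE j).
Proof.
rewrite /argE; case: eqP => [_|j0]; first by apply: leq_ltn_trans (ltn_ord j).
by apply: jet_order_le_mono (Lam_order _); move/eqP: j0 (ltn_ord j); lia.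
Qed.

End Invariants.

Section NormalJets.
Variable C : numClosedFieldType.

Definition gnorm (g2 : {poly C}) : 'I_2 -> {poly C} := fun i => if i == 0 then 'X else g2.

Definition njet (y : nat -> C) : JV -> C :=
  fun v => if v.1 == 0 then (if v.2 == 0%N then 1 else 0) else y v.2.

Lemma gnorm_jet g2 v : (jet_env (gnorm g2) v).[0] = njet (fun k => (g2^`(k.+1)).[0]) v.
Proof. by rewrite /jet_env /gnorm /njet; case: ifP => _ //; exact: horner0_derivn_X. Qed.

Lemma njet_realized kappa (y : nat -> C) :
  exists g2, forall v : JV, (v.2 < kappa)%N -> (jet_env (gnorm g2) v).[0] = njet y v.
Proof.
exists ('X * taylor kappa y) => v vk; rewrite gnorm_jet /njet.
by case: ifP => // _; rewrite horner0_derivn_Xtaylor.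
Qed.

Lemma normal_reparametrization kappa (x : JV -> C) :
  (0 < kappa)%N -> x (0, 0%N) != 0 ->
  exists g2 phi : {poly C},
  [/\ phi.[0] = 0, (phi^`()).[0] = x (0, 0%N), phi^`() != 0 &
   forall v : JV, (v.2 < kappa)%N -> (jet_env (fun i => gnorm g2 i \Po phi) v).[0] = x v].
Proof.
move=> k0 x0.
set psi := taylor kappa (fun k => x (0, k)).
have psi0 : psi`_0 = x (0, 0%N) by rewrite coef_poly k0 /= divr1.
have psi0_neq0 : psi`_0 != 0 by rewrite psi0.
have [g2 Hg2] :=
  comp_Xmul_onto_trunc ('X * taylor kappa (fun k => x (1, k))) kappa psi0_neq0.
exists g2, ('X * psi).
have d0 : (('X * psi)^`()).[0] = x (0, 0%N).
  by rewrite derivM derivX mul1r hornerD hornerM hornerX mul0r addr0 horner_coef0.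
split => //.
- by rewrite hornerM hornerX mul0r.
- by apply: contraNneq x0 => e; rewrite -d0 e horner0.
case=> i k /= ik; rewrite /jet_env /gnorm /=.
case: eqP => [->|/eqP i0]; first by rewrite comp_polyX horner0_derivn_Xtaylor.
have -> : i = 1 by case: i i0 => [[|[|]]] //= ? _; apply/val_inj.
by rewrite /= -derivnS horner0_derivn Hg2 // -horner0_derivn horner0_derivn_Xtaylor.
Qed.

Lemma normal_form kappa (x : JV -> C) : (0 < kappa)%N -> x (0, 0%N) != 0 ->
  exists y : nat -> C, forall (w : nat) (e : mexpr JV C),
    jet_order_le kappa e -> sinv w (M e) ->
    meval id x e = x (0, 0%N) ^+ w * meval id (njet y) e.
Proof.
move=> k0 x0; have [g2 [phi [phi0 phi'0 phi'_neq0 Hx]]] := normal_reparametrization k0 x0.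
exists (fun k => (g2^`(k.+1)).[0]) => w e He Hinv.
rewrite -(meval_low_order id He Hx) -meval_horner -/(M e _) Hinv //.
rewrite hornerM horner_exp phi'0 horner_comp phi0 meval_horner.
by congr (_ * _); apply: meval_eq_env => v; rewrite gnorm_jet.
Qed.

Lemma njet_Lam j (y : nat -> C) : meval id (njet y) (Lam C j) = y j.+1.
Proof.
have [g2 Hg2] := njet_realized j.+2 y.
rewrite -(meval_low_order id (Lam_order C j) Hg2) -meval_horner -/(M _ _).
by rewrite M_Lam_normal // (Hg2 (1, j.+1)).
Qed.

Lemma njet_argE kappa (j : 'I_kappa) (y : nat -> C) :
  meval id (njet y) (argE C j) = y j.
Proof.
by rewrite /argE; case: eqP => [-> //|/eqP j0]; rewrite njet_Lam prednK ?lt0n.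
Qed.

Lemma scaling_invariance kappa m (P : mexpr JV C) (c : C) (y : nat -> C) :
  jet_order_le kappa P -> sinv m (M P) -> c != 0 ->
  meval id (fun v => c ^+ v.2.+1 * njet y v) P = c ^+ m * meval id (njet y) P.
Proof.
move=> HP Hinv c0; have [g2 Hg2] := njet_realized kappa y.
have dilation' : (c *: 'X : {poly C})^`() = c%:P by rewrite derivZ derivX alg_polyC.
have := Hinv (gnorm g2) (c *: 'X); rewrite dilation' polyC_eq0.
move=> /(_ c0) /(congr1 (horner^~ 0)).
rewrite hornerM horner_exp hornerC horner_comp hornerZ hornerX mulr0 /M !meval_horner.
rewrite -(meval_low_order id HP Hg2) => <-.
apply: meval_low_order HP _ => v vk.
by rewrite /jet_env horner0_derivn_comp_scale; congr (_ * _); rewrite Hg2.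
Qed.

End NormalJets.

Section Decomposition.
Variable C : numClosedFieldType.

(* reduce P: the restriction of P to normal jets, as a polynomial in the
   variables z_k = f_2^(k+1), k < kappa. *)
Definition normal_subst kappa (v : JV) : mexpr 'I_kappa C :=
  if v.1 == 0 then MCst (if v.2 == 0%N then 1 else 0)
  else oapp MVar (MCst 0) (insub v.2 : option 'I_kappa).

Definition reduce kappa (P : mexpr JV C) : mexpr 'I_kappa C :=
  msubst (normal_subst kappa) P.

Definition ext kappa (z : 'I_kappa -> C) (k : nat) : C := oapp z 0 (insub k : option 'I_kappa).

Lemma ext_lt kappa (z : 'I_kappa -> C) k (k_lt : (k < kappa)%N) : ext z k = z (Ordinal k_lt).
Proof. by rewrite /ext insubT. Qed.

Lemma meval_reduce kappa (z : 'I_kappa -> C) (P : mexpr JV C) :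
  meval id z (reduce kappa P) = meval id (njet (ext z)) P.
Proof.
rewrite meval_msubst; apply: meval_eq_env => v.
by rewrite /normal_subst /njet /ext; case: (v.1 == 0) => //; case: insubP.
Qed.

(* Scaling a normal jet by s^(2kappa-1) turns
   them into the coefficients of s^((2kappa-1)m - kappa d) in a polynomial in s. *)
Lemma weight_bound kappa m (P : mexpr JV C) (z : 'I_kappa -> C) d :
  (0 < kappa)%N -> jet_order_le kappa P -> sinv m (M P) ->
  ((2 * kappa - 1) * m < kappa * d)%N ->
  meval id z (wpart (@arg_weight kappa) (reduce kappa P) d) = 0.
Proof.
move=> k0 HP Hinv Ed; rewrite -coef_wpoly.
set W := meval (@polyC C) (fun v : JV => if v.1 == 0
  then (if v.2 == 0%N then 'X^(2 * kappa - 1) else 0)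
  else ext z v.2 *: 'X^(kappa - v.2.+1)) P.
apply: (coef_vanish_of_laurent (W := W) k0 _ Ed) => s s0.
rewrite horner_wpoly meval_reduce exprM.
rewrite -(scaling_invariance _ HP Hinv); last by rewrite expf_neq0.
rewrite /W meval_horner; apply: meval_low_order HP _ => -[i k] /= ik.
rewrite /njet /=; case: (i == 0).
  by case: k {ik} => [|k] /=; rewrite ?hornerXn ?horner0 ?mulr1 ?mulr0 ?expr1.
rewrite hornerZ hornerXn !(ext_lt _ ik) arg_weightE /= mulrCA; congr (_ * _).
rewrite -!exprM.
have -> : ((2 * kappa - 1) * k.+1 = kappa * (2 * k + 1) + (kappa - k.+1))%N by nia.
by rewrite exprD mulrAC exprVn mulfV ?expf_neq0 // mul1r.
Qed.


Lemma a_range_reindex kappa m (u : C) (G : nat -> C) : (2 <= kappa)%N -> u != 0 ->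
  \sum_(a <- a_range kappa m) u ^ a * G `|m%:Z - a|%N =
  \sum_(d < (kappa * m).+1 | (kappa * d <= (2 * kappa - 1) * m)%N) u ^+ m * u^-1 ^+ d * G d.
Proof.
move=> k2 u0.
have km : (kappa * m)%:Z = m%:Z + (kappa.-1 * m)%N%:Z.
  by rewrite -PoszD; congr Posz; case: kappa k2 => [|k] //= _; rewrite mulSn.
rewrite /a_range big_filter big_map.
have -> : iota 0 (kappa * m).+1 = index_iota 0 (kappa * m).+1 by rewrite /index_iota subn0.
rewrite big_rev_mkord subn0.
apply: eq_big => [d|d _]; have dkm : (d <= kappa * m)%N by rewrite -ltnS.
  rewrite subSS -(subzn dkm) km addrAC addrK gerBl andbT mulrBr lerNl opprB lerBlDr.
  rewrite -!PoszM -PoszD lez_nat -mulnDl; congr (_ <= _ * _)%N; lia.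
by rewrite subSS -(subzn dkm) km addrAC addrK subKr absz_nat expfzDr // -exprz_inv.
Qed.

Lemma wpart_homog_range kappa m (Q : mexpr 'I_kappa C) a : a \in a_range kappa m ->
  weighted_homog (@arg_weight kappa) (m%:Z - a) (wpart (@arg_weight kappa) Q `|m%:Z - a|%N).
Proof.
rewrite mem_filter => /andP[/andP[_ am] _] t y.
have ma : 0 <= m%:Z - a by rewrite subr_ge0.
by rewrite wpart_homog -[X in t ^ X](gez0_abs ma).
Qed.

Lemma invariant_decomposition kappa m (P : mexpr JV C) : (2 <= kappa)%N -> DS kappa m P ->
  forall x : JV -> C, meval id x (f1' C) != 0 ->
  meval id x P = lam_sum m (fun a => wpart (@arg_weight kappa) (reduce kappa P) `|m%:Z - a|%N) x.
Proof.
move=> k2 [HP /invariant_sinv Hinv] x x0.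
have k0 : (0 < kappa)%N by apply: leq_trans k2.
set u := x (0, 0%N); set Q := reduce kappa P; set Qd := wpart _ Q.
have [y Hy] := normal_form k0 x0.
pose z (j : 'I_kappa) := y j.
have xP : meval id x P = u ^+ m * meval id z Q.
  rewrite (Hy _ _ HP Hinv) meval_reduce; congr (_ * _).
  apply: meval_low_order HP _ => -[i k] /= ik.
  by rewrite /njet; case: (i == 0) => //; rewrite (ext_lt _ ik).
have x_arg j : arg_env x j = u ^+ arg_weight j * z j.
  by rewrite arg_envE (Hy _ _ (argE_order C j) (@sinv_argE C _ j)) njet_argE.
have z_Qd d : meval id z (Qd d) = u^-1 ^+ d * meval id (arg_env x) (Qd d).
  by rewrite (meval_eq_env _ _ x_arg) wpart_homog mulrA -exprMn mulVf // expr1n mul1r.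
pose N := maxn (size (wpoly (@arg_weight kappa) z Q)) (kappa * m).+1.
rewrite xP (@meval_sum_wparts _ _ (@arg_weight kappa) _ _ N) ?leq_maxl // /lam_sum.
rewrite (@a_range_reindex kappa m u (fun d => meval id (arg_env x) (Qd d)) k2 x0).
rewrite mulr_sumr (bigID (fun d : 'I_N => (kappa * d <= (2 * kappa - 1) * m)%N)) /=.
rewrite [X in _ + X]big1 ?addr0 => [|d]; last first.
  by rewrite -ltnNge => /(weight_bound z k0 HP Hinv) ->; rewrite mulr0.
rewrite (@big_ord_widen_cond _ _ _ (kappa * m).+1 N
  (fun d => (kappa * d <= (2 * kappa - 1) * m)%N)
  (fun d => u ^+ m * u^-1 ^+ d * meval id (arg_env x) (Qd d)) (leq_maxr _ _)).
apply: eq_big => [d|d _].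
  by case dm: (kappa * d <= _)%N => //=; symmetry; rewrite ltnS; nia.
by rewrite z_Qd mulrA.
Qed.

End Decomposition.

Section Converse.
Variables (C : numClosedFieldType) (kappa m : nat).
Variables (Pa : int -> mexpr 'I_kappa C) (P : mexpr JV C).
Hypothesis Pa_homog : forall a, a \in a_range kappa m ->
  weighted_homog (@arg_weight kappa) (m%:Z - a) (Pa a).
Hypothesis P_repr : forall x : JV -> C, meval id x (f1' C) != 0 ->
  meval id x P = lam_sum m Pa x.

Definition defect (f : 'I_2 -> {poly C}) (phi : {poly C}) (t0 : C) : C :=
  (M P (fun i => f i \Po phi)).[t0] - (phi^`() ^+ m * (M P f \Po phi)).[t0].

Lemma defectE f phi t0 : defect f phi t0 =
  meval id (fun v => (jet_env (fun i => f i \Po phi) v).[t0]) P -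
  (phi^`()).[t0] ^+ m * meval id (fun v => (jet_env_comp f phi v).[t0]) P.
Proof. by rewrite /defect hornerM horner_exp M_comp !meval_horner. Qed.

(* Where f_1' o phi and phi' do not vanish, both sides are computed from the
   representation, and each term is invariant: (f_1')^a scales by (phi')^a and
   P_a, of weight m - a, by (phi')^(m-a). *)
Lemma defect_eq0_at f phi t0 : phi^`() != 0 ->
  ((f 0)^`() \Po phi).[t0] != 0 -> (phi^`()).[t0] != 0 -> defect f phi t0 = 0.
Proof.
move=> phi'0 f'0 b0; rewrite defectE; apply/eqP; rewrite subr_eq0; apply/eqP.
set b := (phi^`()).[t0].
set X := fun v => (jet_env (fun i => f i \Po phi) v).[t0].
set Y := fun v => (jet_env_comp f phi v).[t0].
have XY1 : meval id X (f1' C) = meval id Y (f1' C) * b.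
  by rewrite (sinv_pointwise _ _ (@sinv_first_derivative C 0) phi'0) expr1 mulrC.
have Y1 : meval id Y (f1' C) != 0 by [].
rewrite P_repr ?XY1 ?mulf_neq0 // P_repr // /lam_sum mulr_sumr.
apply: eq_big_seq => a a_in.
have XY_arg (j : 'I_kappa) : arg_env X j = b ^+ arg_weight j * arg_env Y j.
  by rewrite !arg_envE (sinv_pointwise _ _ (@sinv_argE C _ j) phi'0).
rewrite (meval_eq_env _ _ XY_arg) Pa_homog // XY1 expfzMl.
by rewrite -mulrA [b ^ a * _]mulrA -expfzDr // addrC subrK mulrCA.
Qed.

Lemma invariance_generic f phi : phi^`() != 0 -> (f 0)^`() \Po phi != 0 ->
  M P (fun i => f i \Po phi) = phi^`() ^+ m * (M P f \Po phi).
Proof.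
move=> phi'0 f'0; apply/eqP; rewrite -subr_eq0; apply/eqP.
apply: (poly_eq0_off_zeros (q := ((f 0)^`() \Po phi) * phi^`())); first by rewrite mulf_neq0.
move=> t; rewrite hornerM mulf_eq0 negb_or => /andP[f't b0].
by rewrite hornerD hornerN; apply: defect_eq0_at.
Qed.

(* Perturbation of f_1 by c t, which makes f_1' o phi nonzero for all but one c. *)
Definition perturb (f : 'I_2 -> {poly C}) (c : C) : 'I_2 -> {poly C} :=
  fun i => if i == 0 then f i + c *: 'X else f i.

Lemma defect_perturb_poly f phi t0 : exists A : {poly C},
  A.[0] = defect f phi t0 /\ forall c, A.[c] = defect (perturb f c) phi t0.
Proof.
pose a1 v := (jet_env (fun i => f i \Po phi) v).[t0].
pose b1 (v : JV) := if v.1 == 0 then (phi^`(v.2.+1)).[t0] else 0.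
pose a2 v := (jet_env_comp f phi v).[t0].
pose b2 (v : JV) := if v.1 == 0 then (('X : {poly C})^`(v.2.+1) \Po phi).[t0] else 0.
pose A := meval (@polyC C) (fun v => (a1 v)%:P + b1 v *: 'X) P -
  ((phi^`()).[t0] ^+ m)%:P * meval (@polyC C) (fun v => (a2 v)%:P + b2 v *: 'X) P.
have Ac c : A.[c] = meval id (fun v => a1 v + c * b1 v) P -
    (phi^`()).[t0] ^+ m * meval id (fun v => a2 v + c * b2 v) P.
  by rewrite hornerD hornerN hornerM hornerC -!meval_affine.
exists A; split=> [|c]; rewrite Ac defectE.
  by congr (_ - _ * _); apply: meval_eq_env => v; rewrite mul0r addr0.
congr (_ - _ * _); apply: meval_eq_env => v;
  rewrite /a1 /b1 /a2 /b2 /jet_env /jet_env_comp /perturb; case: ifP => _;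
  rewrite ?mulr0 ?addr0 //.
  by rewrite comp_polyD comp_polyZ comp_polyX derivnD derivnZ hornerD hornerZ.
by rewrite derivnD derivnZ comp_polyD comp_polyZ hornerD hornerZ.
Qed.

Lemma representation_invariant : jet_order_le kappa P -> DS kappa m P.
Proof.
move=> HP; split => // f phi phi'0.
rewrite -M_comp -/(M P _) -/(M P f).
apply/eqP; rewrite -subr_eq0; apply/eqP; apply: poly_eq0_everywhere => t0.
rewrite hornerD hornerN -/(defect f phi t0).
have [A [<- Ac]] := defect_perturb_poly f phi t0.
suff -> : A = 0 by rewrite horner0.
apply: (poly_eq0_off_zeros (q := 'X + (((f 0)^`() \Po phi)`_0)%:P)).
  by rewrite -size_poly_eq0 size_XaddC.
move=> c qc; rewrite Ac /defect invariance_generic ?subrr //.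
(* (f_1 + c t)' o phi has constant term c + (f_1' o phi)(0), nonzero as q(c) != 0. *)
apply: contraNneq qc => f'0.
have : ((perturb f c 0)^`() \Po phi)`_0 = 0 by rewrite f'0 coef0.
rewrite /perturb eqxx derivD derivZ derivX comp_polyD comp_polyZ comp_polyC.
by rewrite coefD coefZ coefC /= hornerD hornerX hornerC mulr1 addrC => ->.
Qed.

End Converse.

Unset Implicit Arguments.

Theorem mainTheorem8 (C : numClosedFieldType) (kappa m : nat) :
  (2 <= kappa)%N ->
  (forall P : mexpr JV C, DS kappa m P ->
     exists Pa : int -> mexpr 'I_kappa C,
       (forall a, a \in a_range kappa m ->
          weighted_homog (arg_weight (kappa:=kappa)) (m%:Z - a) (Pa a)) /\
       (forall x : JV -> C, meval id x (f1' C) != 0 ->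
          meval id x P = lam_sum m Pa x))
  /\
  (forall (Pa : int -> mexpr 'I_kappa C) (P : mexpr JV C),
     (forall a, a \in a_range kappa m ->
        weighted_homog (arg_weight (kappa:=kappa)) (m%:Z - a) (Pa a)) ->
     jet_order_le kappa P ->
     (forall x : JV -> C, meval id x (f1' C) != 0 ->
        meval id x P = lam_sum m Pa x) ->
     DS kappa m P).
Proof.
move=> k2; split=> [P HP | Pa P Pa_homog HP P_repr].
- exists (fun a => wpart (@arg_weight kappa) (reduce kappa P) `|m%:Z - a|%N).
  split; first exact: wpart_homog_range.
  exact: invariant_decomposition.
- exact: representation_invariant Pa_homog P_repr HP.
Qed.
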